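(* On $\mathbb{R}_+$ let $f_0(x)=e^{-x}$ and $f_c(x)=(x-1)^2e^{-x}$. Then $f_0\succ f_c$.
   Context: Majorization on $\mathbb{R}_+$ (Lebesgue measure): $f\succ g$ means $\int_0^\infty f=\int_0^\infty g$ and $\int_0^\infty[f(x)-t]_+dx\ge\int_0^\infty[g(x)-t]_+dx$ for all $t\ge0$, where $[z]_+=\max(z,0)$. *)

From HB Require Import structures.
From mathcomp Require Import all_boot all_order all_algebra.
From mathcomp Require Import all_classical all_reals all_analysis.
Set Implicit Arguments. Unset Strict Implicit. Unset Printing Implicit Defensive.
Import Order.TTheory GRing.Theory Num.Theory.
Local Open Scope classical_set_scope.
Local Open Scope ring_scope.

Definition pospart {R : realType} (z : R) : R := Num.max z 0.

Definition intRplus {R : realType} (f : R -> R) : \bar R :=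
  (\int[@lebesgue_measure R]_(x in `[0%R, +oo[) (f x)%:E)%E.

Definition majorizes {R : realType} (f g : R -> R) : Prop :=
  intRplus f = intRplus g /\
  forall t : R, 0 <= t ->
    (intRplus (fun x => pospart (g x - t)) <= intRplus (fun x => pospart (f x - t)))%E.

Definition f0 {R : realType} (x : R) : R := expR (- x).
Definition fc {R : realType} (x : R) : R := (x - 1) ^+ 2 * expR (- x).

(* Both functions have integral 1, and for 0 < t < 1 the level integral of f0 is
   int (f0 - t)_+ = 1 - t + t ln t.  Since fc <= f0 on [0, 2] and fc <= 4 e^-3 on
   [1, +oo[, levels t >= 4 e^-3 are settled pointwise.  For smaller t, (fc - t)_+
   is bounded piecewise by (1 - t) fc on [0, 1], by fc on [1, a], by fc - t on a
   window [a, b] where fc >= t, and by (1 - t / fc b) fc beyond b, where fc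
   decreases; everything is then integrated with the primitive
   Fc x = -(x^2 + 1) e^-x of fc.  The window a = 3 - 2/e, b = 2 - ln t makes the
   bound exactly 1 - t + t ln t; when t is too large for fc >= t on that window,
   the cruder bound (1 - t / (4 e^-3)) fc on [1, +oo[ already suffices, using
   17/50 <= 1/e <= 19/50. *)

From mathcomp Require Import all_boot all_order all_algebra.
From mathcomp Require Import all_classical all_reals all_analysis.
From mathcomp Require Import measurable_realfun ring lra.
Set Implicit Arguments. Unset Strict Implicit. Unset Printing Implicit Defensive.
Import Order.TTheory GRing.Theory Num.Theory.
Import numFieldNormedType.Exports.
Local Open Scope classical_set_scope.
Local Open Scope ring_scope.

Section antiderivative.
Context {R : realType}.
Notation mu := (@lebesgue_measure R).
Implicit Types (f F : R -> R) (a b : R).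

Lemma is_derive_continuous f F :
  (forall x, is_derive x (1 : R) F (f x)) -> continuous F.
Proof.
move=> dF x; apply: differentiable_continuous.
by apply/derivable1_diffP; by case: (dF x).
Qed.

Lemma integral_itv_cc_is_derive f F a b : a < b -> continuous f ->
  (forall x, is_derive x (1 : R) F (f x)) ->
  (\int[mu]_(x in `[a, b]) (f x)%:E = (F b - F a)%:E)%E.
Proof.
move=> ab cf dF; rewrite EFinB; apply: continuous_FTC2 => //.
- exact: continuous_subspaceT.
- have cF := is_derive_continuous dF; split.
  + by move=> x _; by case: (dF x).
  + exact/cvg_at_right_filter/cF.
  + exact/cvg_at_left_filter/cF.
- by move=> x _; rewrite derive1E derive_val.
Qed.

Lemma ge0_integral_itv_cy_is_derive f F a :
  (forall x, a <= x -> 0 <= f x) -> continuous f ->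
  (forall x, is_derive x (1 : R) F (f x)) -> F x @[x --> +oo] --> 0 ->
  (\int[mu]_(x in `[a, +oo[) (f x)%:E = (- F a)%:E)%E.
Proof.
move=> f0 cf dF F0.
have dF' x : a < x -> derivable F x 1 by move=> _; case: (dF x).
have F'f : {in `]a, +oo[, (F^`())%classic =1 f} by move=> x _; rewrite derive1E derive_val.
have Fa : F x @[x --> a^'+] --> F a by exact/cvg_at_right_filter/(is_derive_continuous dF).
by rewrite (ge0_continuous_FTC2y f0 (continuous_subspaceT cf) F0 dF' Fa F'f) sub0e.
Qed.

Lemma ge0_le_integral_EFin (D : set R) f g : measurable D ->
  measurable_fun setT f -> measurable_fun setT g ->
  (forall x, D x -> 0 <= f x) -> (forall x, D x -> f x <= g x) ->
  (\int[mu]_(x in D) (f x)%:E <= \int[mu]_(x in D) (g x)%:E)%E.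
Proof.
move=> mD mf mg f0 fg.
by apply: ge0_le_integral => //; exact/measurable_EFinP/measurable_funTS.
Qed.

Lemma ge0_integral_itv_cy_split f a b : a <= b -> measurable_fun setT f ->
  (forall x, a <= x -> 0 <= f x) ->
  (\int[mu]_(x in `[a, +oo[) (f x)%:E =
   \int[mu]_(x in `[a, b]) (f x)%:E + \int[mu]_(x in `[b, +oo[) (f x)%:E)%E.
Proof.
move=> ab mf f0.
have mfE D : measurable_fun D (EFin \o f) by exact/measurable_EFinP/measurable_funTS.
rewrite -(integral_itv_obnd_cbnd (r := b)) //.
rewrite (@itv_bndbnd_setU _ _ (BLeft a) (BRight b) +oo%O) ?bnd_simp//.
rewrite ge0_integral_setU //=.
- exact: mfE.
- move=> x; rewrite /= !in_itv /= => -[/andP[ax _]|/andP[bx _]]; rewrite lee_fin f0//.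
  exact: le_trans ab (ltW bx).
- rewrite disj_set2E; apply/eqP/seteqP; split => x //=.
  by rewrite !in_itv /= => -[/andP[_ xb] /andP[bx _]]; lra.
Qed.

End antiderivative.
Section pospart.
Context {R : realType}.
Implicit Types y z w t : R.

Lemma ge0_pospart z : 0 <= z -> pospart z = z.
Proof. by move=> z0; rewrite /pospart max_l. Qed.

Lemma le0_pospart z : z <= 0 -> pospart z = 0.
Proof. by move=> z0; rewrite /pospart max_r. Qed.

Lemma pospart_ge0 z : 0 <= pospart z.
Proof. by rewrite /pospart le_max lexx orbT. Qed.

Lemma pospart_le z w : z <= w -> 0 <= w -> pospart z <= w.
Proof. by move=> zw w0; rewrite /pospart ge_max zw w0. Qed.

Lemma ler_pospart z w : z <= w -> pospart z <= pospart w.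
Proof. by move=> zw; rewrite /pospart ge_max !le_max lexx zw !orbT. Qed.

Lemma pospart_subr_le_scale y t G : 0 < G -> 0 <= y <= G -> 0 <= t <= G ->
  pospart (y - t) <= (1 - t / G) * y.
Proof.
move=> G0 /andP[y0 yG] /andP[t0 tG].
have u1 : t / G <= 1 by rewrite ler_pdivrMr // mul1r.
have u0 : 0 <= t / G by rewrite divr_ge0 // ltW.
apply: pospart_le; last by rewrite mulr_ge0 // subr_ge0.
have {1}-> : t = t / G * G by rewrite divfK ?gt_eqF.
nra.
Qed.

Lemma measurable_pospart_subr (g : R -> R) t : measurable_fun setT g ->
  measurable_fun setT (fun x => pospart (g x - t)).
Proof. by move=> mg; apply: measurable_maxr => //; exact: measurable_funB. Qed.

Lemma intRplus_pospart_subr0 (f : R -> R) : (forall x, 0 <= f x) ->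
  intRplus (fun x => pospart (f x - 0)) = intRplus f.
Proof.
by move=> f0; congr intRplus; apply/funext => x; rewrite subr0 ge0_pospart.
Qed.

End pospart.

Section exp_bounds.
Context {R : realType}.

Lemma expR_ge_pow1Dx (x : R) n : (0 < n)%N -> 0 <= 1 + x / n%:R ->
  (1 + x / n%:R) ^+ n <= expR x.
Proof.
move=> n0 h; rewrite -[x in expR x](@divfK _ n%:R) ?pnatr_eq0 -?lt0n //.
by rewrite expRM_natr lerXn2r ?nnegrE ?expR_ge0 ?expR_ge1Dx.
Qed.

Lemma expRN1_bounds : 17 / 50 <= expR (- 1 : R) <= 19 / 50.
Proof.
have lo : 17 / 50 <= (1 + -1 / 8%:R) ^+ 8 :> R by rewrite !exprSr expr0; lra.
have hi : 50 / 19 <= (1 + 1 / 16%:R) ^+ 16 :> R by rewrite !exprSr expr0; lra.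
apply/andP; split; first by apply: le_trans lo (expR_ge_pow1Dx _ _) => //; lra.
have e1 : 50 / 19 <= expR (1 : R).
  by apply: le_trans hi (expR_ge_pow1Dx _ _) => //; lra.
rewrite expRN -[19 / 50]invf_div lef_pV2 ?posrE //; lra.
Qed.

End exp_bounds.

Section f0_fc.
Context {R : realType}.
Notation mu := (@lebesgue_measure R).

Definition Fc (x : R) : R := - ((x ^+ 2 + 1) * expR (- x)).

Lemma is_derive_expRN (x : R) :
  is_derive x (1 : R) (fun y => expR (- y)) (- expR (- x)).
Proof.
have h : is_derive x (1 : R) (expR \o -%R) (expR (- x) * -1).
  exact: is_derive1_comp.
by rewrite mulrN1 in h.
Qed.

Lemma is_derive_Fc (x : R) : is_derive x (1 : R) Fc (fc x).
Proof. by apply: is_derive_eq; rewrite /fc /GRing.scale /=; ring. Qed.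

Lemma is_derive_fc (x : R) :
  is_derive x (1 : R) fc (2 * (x - 1) * expR (- x) - (x - 1) ^+ 2 * expR (- x)).
Proof. by apply: is_derive_eq; rewrite /GRing.scale /=; ring. Qed.

Lemma continuous_f0 : continuous (@f0 R).
Proof. exact: is_derive_continuous is_derive_expRN. Qed.

Lemma continuous_fc : continuous (@fc R).
Proof. exact: is_derive_continuous is_derive_fc. Qed.

Lemma sqrD1_expRN_le (x : R) : 1 <= x -> (x ^+ 2 + 1) * expR (- x) <= 12 / x.
Proof.
move=> x1; have x0 : 0 < x by lra.
have ex : 1 + x ^+ 3 / 6 <= expR x by exact: expR_ge1Dxn 2 (ltW x0).
rewrite expRN ler_pdivlMr ?expR_gt0 // mulrAC ler_pdivrMr //; last exact: expR_gt0.
rewrite !exprS expr0 !mulr1 in ex *; nra.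
Qed.

Lemma cvgy_Fc : Fc x @[x --> +oo] --> 0.
Proof.
rewrite -oppr0; apply: cvgN.
apply: (@squeeze_cvgr _ _ _ _ (cst 0) (fun x => 12 / x)).
- near=> x.
  have x1 : 1 <= x by near: x; exact: nbhs_pinfty_ge.
  by rewrite mulr_ge0 ?expR_ge0 ?addr_ge0 ?sqr_ge0 //= sqrD1_expRN_le.
- exact: cvg_cst.
- rewrite -(mulr0 12); apply: cvgM; first exact: cvg_cst.
  by apply/(gtr0_cvgV0 (f := id)); [near=> x | exact: cvg_id].
Unshelve. all: by end_near.
Qed.

Lemma Fc0 : Fc 0 = -1.
Proof. by rewrite /Fc oppr0 expR0 expr0n /= add0r mulr1. Qed.

Lemma Fc1 : Fc 1 = - (2 * expR (- 1)).
Proof. by rewrite /Fc expr1n. Qed.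

Lemma fc_ge0 (x : R) : 0 <= fc x.
Proof. by rewrite /fc mulr_ge0 ?expR_ge0 ?sqr_ge0. Qed.

Lemma f0_le1 (x : R) : 0 <= x -> f0 x <= 1.
Proof. by move=> x0; rewrite /f0 expR_le1 oppr_le0. Qed.

Lemma fc_le_f0 (x : R) : 0 <= x <= 2 -> fc x <= f0 x.
Proof.
move=> /andP[x0 x2]; rewrite /fc /f0 -[leRHS]mul1r ler_pM2r ?expR_gt0 //.
rewrite expr2; nra.
Qed.

Lemma fc_le_max (x : R) : 1 <= x -> fc x <= 4 * expR (- 3).
Proof.
move=> x1.
have h : (1 + (x - 3) / 2%:R) ^+ 2 <= expR (x - 3) by apply: expR_ge_pow1Dx => //; lra.
have -> : expR (- 3) = expR (x - 3) * expR (- x) by rewrite -expRD; congr expR; ring.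
rewrite /fc mulrA ler_pM2r ?expR_gt0 //.
have -> : (x - 1) ^+ 2 = 4 * (1 + (x - 3) / 2%:R) ^+ 2 by field.
by rewrite ler_pM2l.
Qed.

Lemma fc_max_le1 : 4 * expR (- 3) <= 1 :> R.
Proof.
have h := expR_ge1Dx (3 : R).
rewrite expRN ler_pdivrMr ?expR_gt0 // mul1r; lra.
Qed.

Lemma fc_le1 (x : R) : 0 <= x -> fc x <= 1.
Proof.
move=> x0; have [x2|x2] := lerP x 2.
  by apply: le_trans (f0_le1 x0); rewrite fc_le_f0 // x0.
by apply: le_trans fc_max_le1; rewrite fc_le_max //; lra.
Qed.

Lemma fc_nonincreasing (x z : R) : 3 <= x -> x <= z -> fc z <= fc x.
Proof.
move=> x3 xz.
have h : (1 + (z - x) / 2%:R) ^+ 2 <= expR (z - x) by apply: expR_ge_pow1Dx => //; lra.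
rewrite /fc.
have -> : expR (- x) = expR (z - x) * expR (- z) by rewrite -expRD; congr expR; ring.
rewrite mulrA ler_pM2r ?expR_gt0 //.
apply: le_trans (ler_wpM2l (sqr_ge0 _) h).
rewrite -exprMn lerXn2r ?nnegrE //; nra.
Qed.

Lemma sqr_expRN3_le_fc (a x : R) : 1 <= a -> a <= x <= 3 ->
  (a - 1) ^+ 2 * expR (- 3) <= fc x.
Proof.
move=> a1 /andP[ax x3]; rewrite /fc.
apply: ler_pM; rewrite ?sqr_ge0 ?expR_ge0 ?ler_expR //; last lra.
rewrite lerXn2r ?nnegrE //; lra.
Qed.

Lemma intRplus_f0 : intRplus (@f0 R) = 1%E.
Proof.
have dF x : is_derive x (1 : R) (fun x => - expR (- x)) (f0 x).
  by apply: is_derive_eq; rewrite /f0 /GRing.scale /=; ring.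
have F0 : - expR (- x) @[x --> +oo] --> (0 : R) by rewrite -oppr0; apply: cvgN; exact: cvgr_expR.
rewrite /intRplus (ge0_integral_itv_cy_is_derive _ continuous_f0 dF F0).
  by rewrite oppr0 expR0 opprK.
by move=> x _; exact: expR_ge0.
Qed.

Lemma intRplus_fc : intRplus (@fc R) = 1%E.
Proof.
rewrite /intRplus (ge0_integral_itv_cy_is_derive _ continuous_fc is_derive_Fc cvgy_Fc).
  by rewrite Fc0 opprK.
by move=> x _; exact: fc_ge0.
Qed.

Lemma integral_itv_cc_fc_affine (c d a b : R) : a < b ->
  (\int[mu]_(x in `[a, b]) (c * fc x - d)%:E = (c * (Fc b - Fc a) - d * (b - a))%:E)%E.
Proof.
move=> ab.
have cf : continuous (fun x => c * fc x - d).
  by move=> x; apply: cvgB; [apply: cvgM; [exact: cvg_cst | exact: continuous_fc] | exact: cvg_cst].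
have dF x : is_derive x (1 : R) (fun x => c * Fc x - d * x) (c * fc x - d).
  (* [Fc'] is found by instance resolution when [is_derive_eq] is applied. *)
  have Fc' := is_derive_Fc x.
  by apply: is_derive_eq; rewrite /GRing.scale /= mulr1.
by rewrite (integral_itv_cc_is_derive ab cf dF); congr (_%:E); ring.
Qed.

Lemma integral_itv_cy_fc_scale (c a : R) : 0 <= c ->
  (\int[mu]_(x in `[a, +oo[) (c * fc x)%:E = (- (c * Fc a))%:E)%E.
Proof.
move=> c0.
have cf : continuous (fun x => c * fc x).
  by move=> x; apply: cvgM; [exact: cvg_cst | exact: continuous_fc].
have dF x : is_derive x (1 : R) (fun x => c * Fc x) (c * fc x).
  by have Fc' := is_derive_Fc x; apply: is_derive_eq; rewrite /GRing.scale.
rewrite (ge0_integral_itv_cy_is_derive _ cf dF) //.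
- by move=> x _; rewrite mulr_ge0 // fc_ge0.
- by rewrite -(mulr0 c); apply: cvgM; [exact: cvg_cst | exact: cvgy_Fc].
Qed.

End f0_fc.

Section pospart_fc.
Context {R : realType}.
Notation mu := (@lebesgue_measure R).

Lemma Fc_le_Nfc (x : R) : 0 <= x -> Fc x <= - fc x.
Proof. by move=> x0; rewrite /Fc /fc lerN2 ler_pM2r ?expR_gt0 //; nra. Qed.

Lemma measurable_pospart_fc (t : R) : measurable_fun setT (fun x => pospart (fc x - t)).
Proof. exact: measurable_pospart_subr (continuous_measurable_fun continuous_fc). Qed.

Lemma le_integral_itv_cc_pospart_fc (t c d a b : R) : a < b ->
  (forall x, a <= x <= b -> pospart (fc x - t) <= c * fc x - d) ->
  (\int[mu]_(x in `[a, b]) (pospart (fc x - t))%:E <=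
   (c * (Fc b - Fc a) - d * (b - a))%:E)%E.
Proof.
move=> ab h; rewrite -integral_itv_cc_fc_affine //.
apply: ge0_le_integral_EFin => //.
- exact: measurable_pospart_fc.
- apply: measurable_funB => //; apply: measurable_funM => //.
  exact: continuous_measurable_fun continuous_fc.
- by move=> x _; exact: pospart_ge0.
Qed.

Lemma le_integral_itv_cy_pospart_fc (t c a : R) : 0 <= c ->
  (forall x, a <= x -> pospart (fc x - t) <= c * fc x) ->
  (\int[mu]_(x in `[a, +oo[) (pospart (fc x - t))%:E <= (- (c * Fc a))%:E)%E.
Proof.
move=> c0 h; rewrite -integral_itv_cy_fc_scale //.
apply: ge0_le_integral_EFin => //.
- exact: measurable_pospart_fc.
- by apply: measurable_funM => //; exact: continuous_measurable_fun continuous_fc.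
- by move=> x _; exact: pospart_ge0.
- by move=> x; rewrite /= in_itv /= andbT; exact: h.
Qed.

Lemma integral01_pospart_fc_le (t : R) : 0 <= t <= 1 ->
  (\int[mu]_(x in `[0%R, 1%R]) (pospart (fc x - t))%:E <= ((1 - t) * (Fc 1 - Fc 0))%:E)%E.
Proof.
move=> t01; have := @le_integral_itv_cc_pospart_fc t (1 - t) 0 0 1 ltr01.
rewrite mul0r subr0; apply=> x /andP[x0 _].
rewrite subr0 -[t in 1 - t]divr1.
by apply: pospart_subr_le_scale; rewrite // fc_ge0 fc_le1.
Qed.

Lemma integral_itv_cy_pospart_fc_le (t b G : R) : 0 < G -> 0 <= t <= G ->
  (forall x, b <= x -> fc x <= G) ->
  (\int[mu]_(x in `[b, +oo[) (pospart (fc x - t))%:E <= (- ((1 - t / G) * Fc b))%:E)%E.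
Proof.
move=> G0 /andP[t0 tG] fcG; apply: le_integral_itv_cy_pospart_fc.
  by rewrite subr_ge0 ler_pdivrMr // mul1r.
by move=> x bx; apply: pospart_subr_le_scale; rewrite ?fc_ge0 ?fcG ?t0.
Qed.

Lemma intRplus_pospart_fc_le_window (t a b : R) : 0 < t -> 1 < a < b -> 3 <= b ->
  (forall x, a <= x <= b -> t <= fc x) ->
  (intRplus (fun x => pospart (fc x - t)) <= (1 - t - t * (1 + Fc 1 + (b - a)))%:E)%E.
Proof.
move=> t0 /andP[a1 ab] b3 tfc.
have tb : t <= fc b by apply: tfc; rewrite (ltW ab) lexx.
have fcb0 : 0 < fc b := lt_le_trans t0 tb.
have m := measurable_pospart_fc t.
have p0 c x : c <= x -> 0 <= pospart (fc x - t) by move=> _; exact: pospart_ge0.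
rewrite /intRplus (ge0_integral_itv_cy_split ler01 m (p0 0)).
rewrite (ge0_integral_itv_cy_split (ltW a1) m (p0 1)).
rewrite (ge0_integral_itv_cy_split (ltW ab) m (p0 a)).
have I01 := integral01_pospart_fc_le (t := t).
have I1a := @le_integral_itv_cc_pospart_fc t 1 0 1 a a1.
have Iab := @le_integral_itv_cc_pospart_fc t 1 t a b ab.
have Iby := @integral_itv_cy_pospart_fc_le t b (fc b) fcb0.
apply: le_trans (leeD (I01 _) (leeD (I1a _) (leeD (Iab _) (Iby _ _)))) _.
- by rewrite ltW //= (le_trans tb) ?fc_le1 //; lra.
- by move=> x _; rewrite mul1r subr0 pospart_le ?fc_ge0 // lerBlDr lerDl ltW.
- by move=> x /tfc tx; rewrite mul1r ge0_pospart // subr_ge0.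
- by rewrite ltW.
- by move=> x bx; apply: fc_nonincreasing.
have : t / fc b * Fc b <= - t.
  have b0 : 0 <= b by lra.
  have := Fc_le_Nfc b0.
  by rewrite mulrAC ler_pdivrMr //; nra.
rewrite -!EFinD lee_fin Fc0; lra.
Qed.

Lemma intRplus_pospart_fc_le_max (t : R) : 0 <= t <= 4 * expR (- 3) ->
  (intRplus (fun x => pospart (fc x - t)) <=
   ((1 - t) * (Fc 1 - Fc 0) - (1 - t / (4 * expR (- 3))) * Fc 1)%:E)%E.
Proof.
move=> /andP[t0 tM].
have M0 : 0 < 4 * expR (- 3) :> R by rewrite mulr_gt0 ?expR_gt0.
rewrite /intRplus (ge0_integral_itv_cy_split ler01 (measurable_pospart_fc t)).
  rewrite EFinB; apply: leeD.
    by apply: integral01_pospart_fc_le; rewrite t0 (le_trans tM fc_max_le1).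
  by apply: integral_itv_cy_pospart_fc_le; rewrite ?t0 //; exact: fc_le_max.
by move=> x _; exact: pospart_ge0.
Qed.

End pospart_fc.

Section majorization.
Context {R : realType}.
Notation mu := (@lebesgue_measure R).

Lemma intRplus_pospart_f0_ge (t : R) : 0 < t < 1 ->
  ((1 - t + t * ln t)%:E <= intRplus (fun x => pospart (f0 x - t)))%E.
Proof.
move=> /andP[t0 t1]; set L := - ln t.
have L0 : 0 < L by rewrite oppr_gt0 ln_lt0 // t0 t1.
have eL : expR (- L) = t by rewrite opprK lnK.
have dF x : is_derive x (1 : R) (fun x => - expR (- x) - t * x) (f0 x - t).
  by apply: is_derive_eq; rewrite /f0 /GRing.scale /=; ring.
have cf : continuous (fun x => f0 x - t).
  by move=> x; apply: cvgB; [exact: continuous_f0 | exact: cvg_cst].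
have -> : 1 - t + t * ln t = - expR (- L) - t * L - (- expR (- 0) - t * 0).
  by rewrite eL oppr0 expR0 /L; ring.
rewrite -(integral_itv_cc_is_derive L0 cf dF) /intRplus.
have mf0 := continuous_measurable_fun (@continuous_f0 R).
apply: (le_trans (y := \int[mu]_(x in `[0%R, L]) (pospart (f0 x - t))%:E)%E).
  apply: ge0_le_integral_EFin => //.
  - exact: measurable_funB.
  - exact: measurable_pospart_subr.
  - move=> x; rewrite /= in_itv /= => /andP[x0 xL].
    by rewrite subr_ge0 -eL /f0 ler_expR lerN2.
  - by move=> x _; rewrite /pospart le_max lexx.
apply: ge0_subset_integral => //.
- by apply/measurable_EFinP/measurable_funTS; exact: measurable_pospart_subr.
- by move=> x _; rewrite lee_fin pospart_ge0.
- by apply: subset_itvl; rewrite bnd_simp.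
Qed.

Lemma intRplus_pospart_fc_le_f0_large (t : R) : 4 * expR (- 3) <= t ->
  (intRplus (fun x => pospart (fc x - t)) <= intRplus (fun x => pospart (f0 x - t)))%E.
Proof.
move=> tM; apply: ge0_le_integral_EFin => //.
- exact: measurable_pospart_fc.
- exact: measurable_pospart_subr (continuous_measurable_fun continuous_f0).
- by move=> x _; exact: pospart_ge0.
move=> x; rewrite /= in_itv /= andbT => x0.
have [x2|x2] := lerP x 2.
  by apply: ler_pospart; rewrite lerD2r fc_le_f0 // x0.
by rewrite le0_pospart ?pospart_ge0 // subr_le0 (le_trans _ tM) // fc_le_max //; lra.
Qed.

Lemma intRplus_pospart_fc_le_low (t : R) :
  0 < t <= (2 - 2 * expR (- 1)) ^+ 2 * expR (- 3) ->
  (intRplus (fun x => pospart (fc x - t)) <= (1 - t + t * ln t)%:E)%E.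
Proof.
move=> /andP[t0]; set e := expR (- 1); set p := 2 - 2 * e => tp; set L := - ln t.
have eL : expR (- L) = t by rewrite opprK lnK.
have /andP[e_lo e_hi] : 17 / 50 <= e <= 19 / 50 := expRN1_bounds.
have p2 : p ^+ 2 <= 7 / 4.
  have [p0 p1] : 0 <= p /\ p <= 33 / 25 by rewrite /p; lra.
  by rewrite expr2; nra.
have L94 : 9 / 4 <= L.
  have : expR (3 - L) <= p ^+ 2.
    have : expR 3 * t <= expR 3 * (p ^+ 2 * expR (- 3)) by rewrite ler_pM2l ?expR_gt0.
    by rewrite [expR (3 - L)]expRD eL mulrCA expRxMexpNx_1 mulr1.
  by have := expR_ge1Dx (3 - L); lra.
have fc_b : t <= fc (2 + L).
  have -> : fc (2 + L) = ((1 + L) * e) ^+ 2 * t.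
    rewrite /fc -eL /e exprMn -expRM_natr -[RHS]mulrA -expRD.
    by congr (_ * expR _); ring.
  have Le1 : 1 <= (1 + L) * e by nra.
  by rewrite ler_peMl ?ltW // expr2; nra.
apply: le_trans (intRplus_pospart_fc_le_window (a := 1 + p) (b := 2 + L) t0 _ _ _) _.
- by apply/andP; split; rewrite /p; lra.
- lra.
- move=> x /andP[ax xb]; have [x3|x3] := lerP x 3.
    have := sqr_expRN3_le_fc (a := 1 + p) (x := x); rewrite addrC addrK => h.
    by apply: le_trans tp (h _ _); [rewrite /p; lra | apply/andP; split; lra].
  by apply: le_trans fc_b (fc_nonincreasing _ _); lra.
by rewrite lee_fin Fc1 -/e /p /L; lra.
Qed.

Lemma intRplus_pospart_fc_le_mid (t : R) :
  (2 - 2 * expR (- 1)) ^+ 2 * expR (- 3) < t <= 4 * expR (- 3) ->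
  (intRplus (fun x => pospart (fc x - t)) <= (1 - t + t * ln t)%:E)%E.
Proof.
set e := expR (- 1); set p := 2 - 2 * e => /andP[tp tM]; set L := - ln t.
have e3 : expR (- 3) = e ^+ 3 by rewrite /e -expRM_natr mulN1r.
have /andP[e_lo e_hi] : 17 / 50 <= e <= 19 / 50 := expRN1_bounds.
have e0 : 0 < e by rewrite /e expR_gt0.
have t0 : 0 < t by apply: le_lt_trans tp; rewrite mulr_ge0 ?sqr_ge0 ?expR_ge0.
have eL : t * expR L = 1 by rewrite -[t](lnK t0) -expRD /L subrr expR0.
have p2 : 3 / 2 <= p ^+ 2.
  have [p0 p1] : 0 <= p /\ 31 / 25 <= p by rewrite /p; lra.
  by rewrite expr2; nra.
have L83 : L <= 8 / 3.
  have : p ^+ 2 * expR (L - 3) < 1.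
    have : p ^+ 2 * expR (- 3) * expR L < t * expR L by rewrite ltr_pM2r ?expR_gt0.
    by rewrite eL -mulrA -expRD addrC.
  by have := expR_ge1Dx (L - 3); nra.
apply: le_trans (intRplus_pospart_fc_le_max _) _; first by rewrite ltW.
have key : 2 * e ^+ 2 * (2 * e + L) <= 1.
  have [e2 e3'] : e ^+ 2 <= (19 / 50) ^+ 2 /\ e ^+ 3 <= (19 / 50) ^+ 3.
    by split; rewrite lerXn2r ?nnegrE //; lra.
  have L0 : 0 <= L by rewrite /L oppr_ge0 ln_le0 // (le_trans tM fc_max_le1).
  nra.
have : t * (2 * e + L) <= t / (2 * e ^+ 2).
  have := ler_wpM2l (ltW t0) key; rewrite mulr1 => tkey.
  by rewrite ler_pdivlMr ?mulr_gt0 ?exprn_gt0 //; lra.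
rewrite lee_fin Fc0 Fc1 -/e e3 -[ln t]opprK -/L.
have -> : (1 - t / (4 * e ^+ 3)) * - (2 * e) = - (2 * e) + t / (2 * e ^+ 2).
  by field; rewrite gt_eqF.
lra.
Qed.

End majorization.

Theorem mainTheorem8 (R : realType) : majorizes (@f0 R) (@fc R).
Proof.
split; first by rewrite intRplus_f0 intRplus_fc.
move=> t; rewrite le_eqVlt => /predU1P[<-|t0].
  by rewrite !intRplus_pospart_subr0 ?intRplus_f0 ?intRplus_fc // => x;
    rewrite ?fc_ge0 ?expR_ge0.
have [tM|tM] := leP (4 * expR (- 3)) t.
  exact: intRplus_pospart_fc_le_f0_large.
apply: le_trans (intRplus_pospart_f0_ge _); last by rewrite t0 (lt_le_trans tM fc_max_le1).
have [tp|tp] := leP t ((2 - 2 * expR (- 1)) ^+ 2 * expR (- 3)).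
  by apply: intRplus_pospart_fc_le_low; rewrite t0.
by apply: intRplus_pospart_fc_le_mid; rewrite tp ltW.
Qed.
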